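(* Fix a nonzero $\alpha\in A_{\infty_1}$, integers $N\ge 0$ and $l\in\{0,\dots,d-1\}$, and put $\varepsilon=q^{-dN-l}$ and $\delta=q^{-dN}\varepsilon$. Suppose $\delta<|\alpha|^{-1}$. Then for every $x\in\alpha\hat\Lambda_\varepsilon(f)$ one has $\operatorname{dist}(x,\hat\Lambda_\varepsilon(f))<|\alpha|\delta$, where $\hat\Lambda_\varepsilon(f):=f^{-N}\sqrt D\,\Lambda_\varepsilon(f)$ and $\operatorname{dist}(x,Y)=\inf_{y\in Y}|x-y|$.
   Context: Let $q$ be a power of a prime, $k=\mathbb F_q(T)$, $A=\mathbb F_q[T]$, $k_\infty=\mathbb F_q((1/T))$ with absolute value $|x|=q^{\deg_T x}$. For $x\in k_\infty$ let $\|x\|$ be the distance from $x$ to $A$, and for $f\in k_\infty$, $\varepsilon>0$ let $\Lambda_\varepsilon(f)=\{\lambda\in A:\|\lambda f\|<\varepsilon\}$. Let $f\in k_\infty\setminus k$ be a root of $X^2-aX-b$ with $a\in A$ monic, $d:=\deg_T a\ge1$, $b\in\mathbb F_q^*$, chosen with $|f|=q^d$ (its conjugate has absolute value $q^{-d}$). Let $D=a^2+4b$, with $\sqrt D$ chosen so that $f=(a+\sqrt D)/2$ in odd characteristic and $\sqrt D=a$ in characteristic $2$. Let $K=k(f)\subset k_\infty$, $\infty_1$ the place of $K$ induced by $K\subset k_\infty$, and $A_{\infty_1}$ the ring of elements of $K$ regular away from $\infty_1$ (one has $A_{\infty_1}=\mathbb F_q[f,fT,\dots,fT^{d-1}]$);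 absolute values of elements of $K$ are taken in $k_\infty$. *)

From HB Require Import structures.
From mathcomp Require Import all_boot all_order all_algebra.
From mathcomp Require Import boolp classical_sets reals.
Set Implicit Arguments.
Unset Strict Implicit.
Unset Printing Implicit Defensive.
Import Order.TTheory GRing.Theory Num.Theory.
Local Open Scope ring_scope.

(* k_oo = F((1/T)).  A Laurent series is represented by a pair (e, s)
   standing for  sum_{i >= 0} s i * T^(e - i).  Representations are not
   unique; [eqLS] is the equality of the underlying series (coefficientwise). *)
Definition LS (F : Type) := (int * (nat -> F))%type.

Section Laurent.
Variable F : finFieldType.

Definition lcoef (x : LS F) (n : int) : F :=
  if n <= x.1 then x.2 `|x.1 - n|%N else 0.

Definition eqLS (x y : LS F) : Prop := forall n : int, lcoef x n = lcoef y n.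

Definition mkLS (e : int) (c : int -> F) : LS F := (e, fun i : nat => c (e - i%:Z)).

Definition addLS (x y : LS F) : LS F :=
  mkLS (Num.max x.1 y.1) (fun n => lcoef x n + lcoef y n).
Definition oppLS (x : LS F) : LS F := (x.1, fun i => - x.2 i).
Definition subLS (x y : LS F) : LS F := addLS x (oppLS y).
Definition mulLS (x y : LS F) : LS F :=
  (x.1 + y.1, fun n => \sum_(i < n.+1) x.2 i * y.2 (n - i)%N).

Definition polyLS (p : {poly F}) : LS F :=
  mkLS (size p)%:Z (fun n => if 0 <= n then p`_`|n|%N else 0).
Definition cstLS (c : F) : LS F := polyLS c%:P.
Definition oneLS : LS F := cstLS 1.
Definition expLS (x : LS F) (n : nat) : LS F := iter n (mulLS x) oneLS.

Definition degLS (x : LS F) : option int :=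
  match pselect (exists i, x.2 i != 0) with
  | left H => Some (x.1 - (@ex_minn (fun i => x.2 i != 0) H)%:Z)
  | right _ => None
  end.

Definition absLS (R : realType) (x : LS F) : R :=
  match degLS x with Some v => (#|F|%:R : R) ^ v | None => 0 end.

Definition distA (R : realType) (x : LS F) : R :=
  inf [set r : R | exists p : {poly F}, r = absLS R (subLS x (polyLS p))].

Definition Lam (R : realType) (f : LS F) (eps : R) : set {poly F} :=
  [set lam | distA R (mulLS (polyLS lam) f) < eps].

Definition distLS (R : realType) (x : LS F) (Y : set (LS F)) : R :=
  inf [set r : R | exists y, Y y /\ r = absLS R (subLS x y)].

Inductive inAinf1 (d : nat) (f : LS F) : LS F -> Prop :=
| Ai_cst c : inAinf1 d f (cstLS c)
| Ai_gen i : (i < d)%N -> inAinf1 d f (mulLS f (polyLS 'X^i))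
| Ai_add x y : inAinf1 d f x -> inAinf1 d f y -> inAinf1 d f (addLS x y)
| Ai_mul x y : inAinf1 d f x -> inAinf1 d f y -> inAinf1 d f (mulLS x y)
| Ai_eq x y : eqLS x y -> inAinf1 d f x -> inAinf1 d f y.

(* sqrt D: f = (a + sqrt D)/2 in odd characteristic, sqrt D = a in char 2 *)
Definition sqrtD (a : {poly F}) (f : LS F) : LS F :=
  if (2%:R : F) == 0 then polyLS a
  else subLS (mulLS (cstLS 2%:R) f) (polyLS a).

Definition Lamhat (R : realType) (a : {poly F}) (f fi : LS F) (N : nat) (eps : R)
  : set (LS F) :=
  [set y | exists mu, @Lam R f eps mu /\
     y = mulLS (mulLS (expLS fi N) (sqrtD a f)) (polyLS mu)].

End Laurent.
Arguments Lam {F} R f eps.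
Arguments Lamhat {F} R a f fi N eps.

(* Write alpha = u + v f with u, v in A.  Its conjugate alpha' = u + v (a - f)
   satisfies |alpha'| <= 1: the generators f T^i (i < d) of A_{oo_1} have
   conjugates (a - f) T^i of absolute value q^(i-d) <= 1, and |.| is
   multiplicative and ultrametric.  Given lam in Lambda_eps(f), choose P in A
   with |lam f - P| < eps and put mu = u lam + v P.  Then mu f differs from
   (lam f - P) alpha' by an element of A, so mu is in Lambda_eps(f); and
   alpha lam - mu = v (lam f - P), so y = f^-N sqrt(D) mu is in hat Lambda_eps(f)
   with |x - y| = q^(-dN) q^d |v| |lam f - P|.  Finally alpha - alpha' = v sqrt(D)
   with |sqrt D| = q^d > 1 >= |alpha'|, which forces |v| q^d <= |alpha|, whence
   |x - y| < |alpha| q^(-dN) eps = |alpha| delta. *)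

From HB Require Import structures.
From mathcomp Require Import all_boot all_order all_algebra.
From mathcomp Require Import boolp classical_sets reals.
From mathcomp Require Import zify.
From Stdlib Require Import Setoid Morphisms Ring.
Import Order.TTheory GRing.Theory Num.Theory.
Local Open Scope ring_scope.
Set Implicit Arguments.
Unset Strict Implicit.
Unset Printing Implicit Defensive.

Section LaurentSeries.
Variable F : finFieldType.
Implicit Types (x y z g h : LS F) (p r : {poly F}).

Lemma lcoef_repr x i : x.2 i = lcoef x (x.1 - i%:Z).
Proof. rewrite /lcoef ifT; last lia. by congr (x.2 _); lia. Qed.

Lemma LS_ext x y : x.1 = y.1 -> x.2 =1 y.2 -> x = y.
Proof. by move=> e1 e2; apply: injective_projections => //; apply: funext. Qed.

Lemma eqLS_repr x y : x.1 = y.1 -> x.2 =1 y.2 -> eqLS x y.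
Proof. by move=> e1 e2 n; rewrite /lcoef e1 e2. Qed.

Lemma lcoef_mkLS e (c : int -> F) n : lcoef (mkLS e c) n = if n <= e then c n else 0.
Proof. by rewrite /lcoef /=; case: ifP => // le_ne; congr c; lia. Qed.

Lemma lcoef_addLS x y n : lcoef (addLS x y) n = lcoef x n + lcoef y n.
Proof.
rewrite lcoef_mkLS le_max; case: ifPn => // /norP[xn yn].
by rewrite /lcoef (negbTE xn) (negbTE yn) addr0.
Qed.

Lemma lcoef_oppLS x n : lcoef (oppLS x) n = - lcoef x n.
Proof. by rewrite /lcoef /=; case: ifP; rewrite ?oppr0. Qed.

Lemma addLS_repr x y : x.1 = y.1 ->
  (addLS x y).1 = x.1 /\ forall i, (addLS x y).2 i = x.2 i + y.2 i.
Proof. by move=> e; split=> [|i]; rewrite /= -e maxxx // !lcoef_repr e. Qed.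

Definition padLS (k : nat) x : LS F :=
  (x.1 + k%:Z, fun i => if (i < k)%N then 0 else x.2 (i - k)%N).

Lemma padLS_eqLS k x : eqLS (padLS k x) x.
Proof.
move=> n; rewrite /lcoef /=.
by repeat case: ifP => ?; first [done | lia | congr (x.2 _); lia].
Qed.

Lemma eqLS_padLS x y : eqLS x y -> x.1 <= y.1 -> y = padLS `|y.1 - x.1|%N x.
Proof.
move=> xy le_xy; have e1 : y.1 = (padLS `|y.1 - x.1|%N x).1 by rewrite /=; lia.
apply: LS_ext => // i.
by rewrite [LHS]lcoef_repr [RHS]lcoef_repr -e1 padLS_eqLS xy.
Qed.

(* The n-th coefficient of [mulLS x y] only involves the first n+1 coefficients
   of the representations of x and y, so it can be read off a product of
   truncated polynomials. *)
Definition truncp (n : nat) (s : nat -> F) : {poly F} := \poly_(i < n) s i.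

Lemma mulLS_coef x y n m : (n < m)%N ->
  (mulLS x y).2 n = (truncp m x.2 * truncp m y.2)`_n.
Proof.
move=> lt_nm; rewrite coefM; apply: eq_bigr => i _.
by rewrite !coef_poly !ifT //; have := ltn_ord i; lia.
Qed.

Lemma coefMl_low p p' r n :
  (forall k, (k <= n)%N -> p`_k = p'`_k) -> (p * r)`_n = (p' * r)`_n.
Proof. by move=> low; rewrite !coefM; apply: eq_bigr => i _; rewrite low // -ltnS. Qed.

Lemma truncp_mulLS_low x y n k : (k <= n)%N ->
  (truncp n.+1 (mulLS x y).2)`_k = (truncp n.+1 x.2 * truncp n.+1 y.2)`_k.
Proof. by move=> le_kn; rewrite coef_poly ltnS le_kn; apply: mulLS_coef. Qed.

Lemma mulLSC x y : mulLS x y = mulLS y x.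
Proof.
apply: LS_ext => [|n]; first exact: addrC.
by rewrite !(mulLS_coef _ _ (ltnSn n)) mulrC.
Qed.

Lemma mulLSA x y z : mulLS (mulLS x y) z = mulLS x (mulLS y z).
Proof.
apply: LS_ext => [|n]; first by rewrite /= addrA.
rewrite !(mulLS_coef _ _ (ltnSn n)) (coefMl_low _ (@truncp_mulLS_low x y n)).
by rewrite [in RHS]mulrC (coefMl_low _ (@truncp_mulLS_low y z n)) [in RHS]mulrC mulrA.
Qed.

Lemma padLS_mull k x y : mulLS (padLS k x) y = padLS k (mulLS x y).
Proof.
apply: LS_ext => [|n]; first by rewrite /= addrAC.
have low j : (j <= n)%N ->
    (truncp n.+1 (padLS k x).2)`_j = ('X^k * truncp n.+1 x.2)`_j.
  by move=> le_jn; rewrite coefXnM !coef_poly /=; repeat case: ifP => ?; first [done | lia].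
rewrite (mulLS_coef _ _ (ltnSn n)) (coefMl_low _ low) -mulrA coefXnM /=.
by case: ifP => // _; rewrite -(@mulLS_coef x y (n - k) n.+1) //; lia.
Qed.

Lemma mulLS_eql x y z : eqLS x y -> eqLS (mulLS x z) (mulLS y z).
Proof.
wlog le_xy : x y / x.1 <= y.1 => [wlog_xy xy|xy].
  have [le_xy|/ltW le_yx] := lerP x.1 y.1; first exact: wlog_xy.
  by move=> n; rewrite (wlog_xy y x le_yx).
by rewrite (eqLS_padLS xy le_xy) padLS_mull => n; rewrite padLS_eqLS.
Qed.

Lemma lcoef_polyLS p n : lcoef (polyLS p) n = if 0 <= n then p`_`|n|%N else 0.
Proof.
rewrite lcoef_mkLS; case: ifP => // /negbT n_gt; case: ifP => // n_ge0.
by rewrite nth_default //; case: n n_gt n_ge0 => // m; rewrite -ltNge ltz_nat => /ltnW.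
Qed.

Lemma lcoef_cstLS0 n : lcoef (cstLS (0 : F)) n = 0.
Proof. by rewrite lcoef_polyLS coefC; case: ifP => //; case: ifP. Qed.

Definition monoLS (c : F) (k : int) : LS F := (k, fun i => if i == 0%N then c else 0).

Lemma lcoef_monoLS c k n : lcoef (monoLS c k) n = if n == k then c else 0.
Proof. by rewrite /lcoef /=; repeat case: ifP => ?; first [done | lia]. Qed.

Lemma lcoef_mul_monoLS c k x n : lcoef (mulLS (monoLS c k) x) n = c * lcoef x (n - k).
Proof.
have coef i : (mulLS (monoLS c k) x).2 i = c * x.2 i.
  by rewrite /= big_ord_recl subn0 big1 ?addr0 // => j _; rewrite /bump /= mul0r.
rewrite /lcoef coef /=; repeat case: ifP => ?; rewrite ?mulr0 //; try lia.
by congr (c * x.2 _); lia.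
Qed.

Lemma cstLS_monoLS c : eqLS (cstLS c) (monoLS c 0).
Proof.
by move=> n; rewrite lcoef_polyLS lcoef_monoLS coefC; repeat case: ifP => ?; first [done | lia].
Qed.

Lemma polyLSX_monoLS : eqLS (polyLS 'X) (monoLS 1 1).
Proof.
move=> n; rewrite lcoef_polyLS lcoef_monoLS coefX; case: (n =P 1) => [->//|ne1].
by case: ifP => // n_ge0; have /eqP/negbTE-> : `|n|%N <> 1%N by lia.
Qed.

Lemma mul1LS x : eqLS (mulLS (oneLS F) x) x.
Proof. by move=> n; rewrite (mulLS_eql _ (cstLS_monoLS 1)) lcoef_mul_monoLS mul1r subr0. Qed.

Lemma mulLSDl_repr x y z : x.1 = y.1 ->
  eqLS (mulLS (addLS x y) z) (addLS (mulLS x z) (mulLS y z)).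
Proof.
move=> e; have [_ e2] := addLS_repr e.
have /addLS_repr[f1 f2] : (mulLS x z).1 = (mulLS y z).1 by rewrite /= e.
apply: eqLS_repr => [|n]; first by rewrite f1 /= e maxxx.
have truncpD : truncp n.+1 (addLS x y).2 = truncp n.+1 x.2 + truncp n.+1 y.2.
  by apply/polyP => i; rewrite coefD !coef_poly e2; case: ifP; rewrite ?addr0.
by rewrite f2 !(mulLS_coef _ _ (ltnSn n)) truncpD mulrDl coefD.
Qed.

Lemma mulLSDl x y z : eqLS (mulLS (addLS x y) z) (addLS (mulLS x z) (mulLS y z)).
Proof.
pose E := Num.max x.1 y.1.
have le_xE : x.1 <= E by rewrite le_max lexx.
have le_yE : y.1 <= E by rewrite le_max lexx orbT.
pose x' := padLS `|E - x.1|%N x; pose y' := padLS `|E - y.1|%N y.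
have e : x'.1 = y'.1 by rewrite /=; lia.
have xy' : eqLS (addLS x y) (addLS x' y') by move=> m; rewrite !lcoef_addLS !padLS_eqLS.
move=> n; rewrite (mulLS_eql _ xy') (mulLSDl_repr _ e) !lcoef_addLS.
by rewrite (mulLS_eql _ (padLS_eqLS _ x)) (mulLS_eql _ (padLS_eqLS _ y)).
Qed.

Lemma LS_ring_theory : ring_theory (cstLS (0 : F)) (oneLS F) (@addLS F) (@mulLS F)
  (@subLS F) (@oppLS F) (@eqLS F).
Proof.
split=> [x n|x y n|x y z n|x|x y|x y z|x y z|//|x n].
- by rewrite lcoef_addLS lcoef_cstLS0 add0r.
- by rewrite !lcoef_addLS addrC.
- by rewrite !lcoef_addLS addrA.
- exact: mul1LS.
- by rewrite mulLSC.
- by rewrite mulLSA.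
- exact: mulLSDl.
- by rewrite lcoef_addLS lcoef_oppLS lcoef_cstLS0 subrr.
Qed.

#[local] Instance eqLS_Equivalence : Equivalence (@eqLS F).
Proof. by split=> [x n|x y xy n|x y z xy yz n]; rewrite ?xy ?yz. Qed.

#[local] Instance addLS_Proper : Proper (@eqLS F ==> @eqLS F ==> @eqLS F) (@addLS F).
Proof. by move=> x x' xx' y y' yy' n; rewrite !lcoef_addLS xx' yy'. Qed.

#[local] Instance mulLS_Proper : Proper (@eqLS F ==> @eqLS F ==> @eqLS F) (@mulLS F).
Proof.
by move=> x x' xx' y y' yy' n; rewrite (mulLS_eql _ xx') mulLSC (mulLS_eql _ yy') mulLSC.
Qed.

#[local] Instance oppLS_Proper : Proper (@eqLS F ==> @eqLS F) (@oppLS F).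
Proof. by move=> x x' xx' n; rewrite !lcoef_oppLS xx'. Qed.

#[local] Instance subLS_Proper : Proper (@eqLS F ==> @eqLS F ==> @eqLS F) (@subLS F).
Proof. by move=> x x' xx' y y' yy'; rewrite /subLS xx' yy'. Qed.

Lemma LS_ring_ext : ring_eq_ext (@addLS F) (@mulLS F) (@oppLS F) (@eqLS F).
Proof. by split; apply _. Qed.

Add Ring LS_ring : LS_ring_theory (setoid eqLS_Equivalence LS_ring_ext).

Lemma polyLS0 : polyLS 0 = cstLS (0 : F).
Proof. by rewrite /cstLS polyC0. Qed.

Lemma polyLSD p r : eqLS (polyLS (p + r)) (addLS (polyLS p) (polyLS r)).
Proof. by move=> n; rewrite lcoef_addLS !lcoef_polyLS coefD; case: ifP; rewrite ?addr0. Qed.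

Lemma polyLSN p : eqLS (polyLS (- p)) (oppLS (polyLS p)).
Proof. by move=> n; rewrite lcoef_oppLS !lcoef_polyLS coefN; case: ifP; rewrite ?oppr0. Qed.

Lemma polyLS_CM c p : eqLS (polyLS (c%:P * p)) (mulLS (polyLS c%:P) (polyLS p)).
Proof.
move=> n; rewrite (mulLS_eql _ (cstLS_monoLS c)) lcoef_mul_monoLS subr0.
by rewrite !lcoef_polyLS coefCM; case: ifP; rewrite ?mulr0.
Qed.

Lemma polyLS_XM p : eqLS (polyLS ('X * p)) (mulLS (polyLS 'X) (polyLS p)).
Proof.
move=> n; rewrite (mulLS_eql _ polyLSX_monoLS) lcoef_mul_monoLS mul1r !lcoef_polyLS coefXM.
by repeat case: ifP => ?; first [done | lia | congr (p`_ _); lia].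
Qed.

Lemma polyLSM p r : eqLS (polyLS (p * r)) (mulLS (polyLS p) (polyLS r)).
Proof.
elim/poly_ind: p r => [|p c IHp] r; first by rewrite mul0r polyLS0; ring.
have -> : (p * 'X + c%:P) * r = p * ('X * r) + c%:P * r by rewrite mulrDl mulrA.
setoid_rewrite polyLSD; setoid_rewrite IHp; setoid_rewrite polyLS_XM.
by setoid_rewrite polyLS_CM; ring.
Qed.

Ltac push_polyLS :=
  repeat (setoid_rewrite polyLSD || setoid_rewrite polyLSM); rewrite /cstLS.

Definition quad_root (a : {poly F}) (b : F) g :=
  eqLS (mulLS g g) (addLS (mulLS (polyLS a) g) (cstLS b)).

(* With g := a - f, [combLS u v g] is the conjugate of [combLS u v f]. *)
Definition combLS (u v : {poly F}) g := addLS (polyLS u) (mulLS (polyLS v) g).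

(* [ring] does not know the relation g^2 = a g + b; this lemma reduces identities
   that use it to ring identities. *)
Lemma eqLS_add_mul0 c e x y :
  eqLS e (cstLS 0) -> eqLS x (addLS y (mulLS c e)) -> eqLS x y.
Proof. by move=> e0 ->; setoid_rewrite e0; ring. Qed.

Section QuadraticRoot.
Variables (a : {poly F}) (b : F) (g : LS F).
Hypothesis g_root : quad_root a b g.

Lemma quad_root_eq0 :
  eqLS (subLS (mulLS g g) (addLS (mulLS (polyLS a) g) (cstLS b))) (cstLS 0).
Proof. by move: g_root; rewrite /quad_root => ->; ring. Qed.

Lemma quad_root_conj : quad_root a b (subLS (polyLS a) g).
Proof. by apply: (eqLS_add_mul0 (c := oneLS F) quad_root_eq0); ring. Qed.

Lemma mul_quad_root_conj : eqLS (mulLS g (subLS (polyLS a) g)) (cstLS (- b)).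
Proof.
have cstLSN : eqLS (cstLS (- b)) (oppLS (cstLS b)) by rewrite /cstLS polyCN; apply: polyLSN.
by setoid_rewrite cstLSN; apply: (eqLS_add_mul0 (c := oppLS (oneLS F)) quad_root_eq0); ring.
Qed.

Lemma combLS_mul u1 v1 u2 v2 :
  eqLS (mulLS (combLS u1 v1 g) (combLS u2 v2 g))
    (combLS (u1 * u2 + v1 * v2 * b%:P) (u1 * v2 + u2 * v1 + v1 * v2 * a) g).
Proof.
apply: (eqLS_add_mul0 (c := mulLS (polyLS v1) (polyLS v2)) quad_root_eq0).
by rewrite /combLS; push_polyLS; ring.
Qed.

Lemma combLS_conj_approx u v lam P :
  eqLS (subLS (mulLS (polyLS (u * lam + v * P)) g)
              (polyLS (u * P + v * a * P + v * b%:P * lam)))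
       (mulLS (subLS (mulLS (polyLS lam) g) (polyLS P))
              (combLS u v (subLS (polyLS a) g))).
Proof.
apply: (eqLS_add_mul0 (c := mulLS (polyLS v) (polyLS lam)) quad_root_eq0).
by rewrite /combLS; push_polyLS; ring.
Qed.

End QuadraticRoot.

Lemma combLS_polyLS u g : eqLS (combLS u 0 g) (polyLS u).
Proof. by rewrite /combLS polyLS0; ring. Qed.

Lemma combLS_add g u1 v1 u2 v2 :
  eqLS (addLS (combLS u1 v1 g) (combLS u2 v2 g)) (combLS (u1 + u2) (v1 + v2) g).
Proof. by rewrite /combLS; push_polyLS; ring. Qed.

Lemma combLS_sub u v g h :
  eqLS (subLS (combLS u v g) (combLS u v h)) (mulLS (polyLS v) (subLS g h)).
Proof. by rewrite /combLS; ring. Qed.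

Lemma combLS_mul_sub f h alpha u v lam P : eqLS alpha (combLS u v f) ->
  eqLS (subLS (mulLS alpha (mulLS h (polyLS lam))) (mulLS h (polyLS (u * lam + v * P))))
       (mulLS h (mulLS (polyLS v) (subLS (mulLS (polyLS lam) f) (polyLS P)))).
Proof. by move=> ->; rewrite /combLS; push_polyLS; ring. Qed.

Lemma sqrtD_conj (a : {poly F}) (f : LS F) : eqLS (sqrtD a f) (subLS f (subLS (polyLS a) f)).
Proof.
have two : eqLS (cstLS (2%:R : F)) (addLS (oneLS F) (oneLS F)).
  by rewrite /cstLS mulr2n polyCD; apply: polyLSD.
rewrite /sqrtD; case: ifP => [/eqP two0|_]; last by setoid_rewrite two; ring.
have two_eq0 : eqLS (addLS (oneLS F) (oneLS F)) (cstLS 0) by rewrite -two0; symmetry.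
by apply: (eqLS_add_mul0 (c := subLS (polyLS a) f) two_eq0); ring.
Qed.

Variant degLS_spec x : option int -> Prop :=
| DegLSNone of (forall i, x.2 i = 0) : degLS_spec x None
| DegLSSome m of x.2 m != 0 & (forall i, (i < m)%N -> x.2 i = 0) :
    degLS_spec x (Some (x.1 - m%:Z)).

Lemma degLSP x : degLS_spec x (degLS x).
Proof.
rewrite /degLS; case: pselect => [ex|nex]; last first.
  by constructor=> i; case: (eqVneq (x.2 i) 0) => // xi; case: nex; exists i.
case: ex_minnP => m xm m_min; constructor => // i lt_im.
by case: (eqVneq (x.2 i) 0) => // /m_min; rewrite leqNgt lt_im.
Qed.

Lemma degLS_reprE x m : x.2 m != 0 -> (forall i, (i < m)%N -> x.2 i = 0) ->
  degLS x = Some (x.1 - m%:Z).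
Proof.
move=> xm low; case: degLSP => [x0|m' xm' low']; first by rewrite x0 eqxx in xm.
have [lt_mm'|lt_m'm|->//] := ltngtP m m'.
  by rewrite low' ?eqxx in xm.
by rewrite low ?eqxx in xm'.
Qed.

Lemma degLS_None x : (forall i, x.2 i = 0) -> degLS x = None.
Proof. by case: degLSP => // m xm _ x0; rewrite x0 eqxx in xm. Qed.

Lemma degLS_Some_lcoef x v : degLS x = Some v ->
  lcoef x v != 0 /\ forall n, v < n -> lcoef x n = 0.
Proof.
case: degLSP => // m xm low [<-]; split; first by rewrite -lcoef_repr.
by move=> n lt_n; rewrite /lcoef; case: ifP => // le_n; rewrite low //; lia.
Qed.

Lemma degLS_None_lcoef x : degLS x = None -> forall n, lcoef x n = 0.
Proof. by case: degLSP => // x0 _ n; rewrite /lcoef x0; case: ifP. Qed.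

Lemma degLS_eqLS x y : eqLS x y -> degLS x = degLS y.
Proof.
move=> xy; case ex: (degLS x) => [v|]; case ey: (degLS y) => [w|] //.
- have [xv xlow] := degLS_Some_lcoef ex; have [yw ylow] := degLS_Some_lcoef ey.
  have [lt_vw|lt_wv|->//] := ltrgtP v w.
    by rewrite -xy xlow ?eqxx in yw.
  by rewrite xy ylow ?eqxx in xv.
- have [xv _] := degLS_Some_lcoef ex.
  by rewrite xy degLS_None_lcoef ?eqxx in xv.
- have [yw _] := degLS_Some_lcoef ey.
  by rewrite -xy degLS_None_lcoef ?eqxx in yw.
Qed.

Lemma degLSM x y : degLS (mulLS x y) =
  match degLS x, degLS y with Some v, Some w => Some (v + w) | _, _ => None end.
Proof.
case: (degLSP x) => [x0|mx xm lowx]; last case: (degLSP y) => [y0|my ym lowy].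
- by apply: degLS_None => n; rewrite /= big1 // => i _; rewrite x0 mul0r.
- by apply: degLS_None => n; rewrite /= big1 // => i _; rewrite y0 mulr0.
have -> : x.1 - mx%:Z + (y.1 - my%:Z) = (mulLS x y).1 - (mx + my)%N%:Z by rewrite /=; lia.
have low_or_high (i : 'I_(mx + my).+1) : (i < mx)%N \/ (mx + my - i < my)%N \/ i = mx :> nat.
  by have := ltn_ord i; lia.
apply: degLS_reprE => [|n lt_n].
  rewrite /= (bigD1 (Ordinal (leq_ltn_trans (leq_addr my mx) (ltnSn _)))) //= big1.
    by rewrite addr0 addKn mulf_neq0.
  move=> i /eqP ne_i; have [lt_i|[lt_i|e]] := low_or_high i.
  - by rewrite lowx ?mul0r.
  - by rewrite lowy ?mulr0.
  - by case: ne_i; apply: val_inj.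
rewrite /= big1 // => i _; case: (ltnP i mx) => [/lowx->|le_i]; first by rewrite mul0r.
by rewrite lowy ?mulr0 //; have := ltn_ord i; lia.
Qed.

Section AbsoluteValue.
Variable R : realType.
Let q : R := #|F|%:R.

Lemma q_gt1 : 1 < q.
Proof. by rewrite /q ltr1n card_finNzRing_gt1. Qed.

Lemma q_gt0 : 0 < q.
Proof. exact: lt_trans ltr01 q_gt1. Qed.

Lemma exprz_q_gt0 (v : int) : 0 < q ^ v.
Proof. exact/exprz_gt0/q_gt0. Qed.

Lemma absLS_eqLS x y : eqLS x y -> absLS R x = absLS R y.
Proof. by move=> xy; rewrite /absLS (degLS_eqLS xy). Qed.

Lemma absLS_ge0 x : 0 <= absLS R x.
Proof. by rewrite /absLS; case: degLS => // v; apply/ltW/exprz_q_gt0. Qed.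

Lemma absLS_cases x : absLS R x = 0 \/ exists v, absLS R x = q ^ v.
Proof. by rewrite /absLS; case: degLS => [v|]; [right; exists v | left]. Qed.

Lemma absLS_eq0 x : absLS R x = 0 <-> eqLS x (cstLS 0).
Proof.
rewrite /absLS; case e: degLS => [v|]; split => //.
- by move=> /eqP; rewrite gt_eqF ?exprz_q_gt0.
- move=> /degLS_eqLS; rewrite e degLS_None // => i.
  by rewrite lcoef_repr lcoef_cstLS0.
- by move=> _ n; rewrite lcoef_cstLS0 degLS_None_lcoef.
Qed.

Lemma absLS_le x v : (forall n, v < n -> lcoef x n = 0) -> absLS R x <= q ^ v.
Proof.
move=> high; rewrite /absLS; case e: degLS => [w|]; last exact/ltW/exprz_q_gt0.
have [xw _] := degLS_Some_lcoef e; rewrite ler_eXz2l ?q_gt1 // leNgt.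
by apply: contra xw => /high ->.
Qed.

Lemma absLS_ge x v : lcoef x v != 0 -> q ^ v <= absLS R x.
Proof.
move=> xv; rewrite /absLS; case e: degLS => [w|]; last by rewrite degLS_None_lcoef ?eqxx in xv.
have [_ high] := degLS_Some_lcoef e; rewrite ler_eXz2l ?q_gt1 // leNgt.
by apply: contra xv => /high ->.
Qed.

Lemma absLS_le_lcoef x v : absLS R x <= q ^ v -> forall n, v < n -> lcoef x n = 0.
Proof.
move=> le_xv n lt_vn; case: (eqVneq (lcoef x n) 0) => // /absLS_ge/le_trans/(_ le_xv).
by rewrite ler_eXz2l ?q_gt1 // leNgt lt_vn.
Qed.

Lemma absLSM x y : absLS R (mulLS x y) = absLS R x * absLS R y.
Proof.
rewrite /absLS degLSM; case: degLS => [v|]; case: degLS => [w|]; rewrite ?mul0r ?mulr0 //.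
by rewrite expfzDr // gt_eqF // q_gt0.
Qed.

Lemma absLSN x : absLS R (oppLS x) = absLS R x.
Proof.
rewrite /absLS; case: (degLSP x) => [x0|m xm low].
  by rewrite degLS_None // => i /=; rewrite x0 oppr0.
by rewrite (@degLS_reprE _ m) //= ?oppr_eq0 // => i /low ->; rewrite oppr0.
Qed.

Lemma absLSD_le x y : absLS R (addLS x y) <= Num.max (absLS R x) (absLS R y).
Proof.
wlog le_xy : x y / absLS R x <= absLS R y => [wlog_xy|].
  case/orP: (le_total (absLS R x) (absLS R y)) => [/wlog_xy//|le_yx].
  rewrite maxC (@absLS_eqLS _ (addLS y x)); first exact: wlog_xy y x le_yx.
  by move=> n; rewrite !lcoef_addLS addrC.
rewrite max_r //; have [y0|[v yv]] := absLS_cases y.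
  have x0 : absLS R x = 0 by apply/eqP; rewrite eq_le absLS_ge0 andbT -y0.
  have /absLS_eq0-> : eqLS (addLS x y) (cstLS 0).
    move: x0 y0 => /absLS_eq0 x0 /absLS_eq0 y0 n.
    by rewrite lcoef_addLS x0 y0 lcoef_cstLS0 addr0.
  exact: absLS_ge0.
rewrite yv; apply: absLS_le => n lt_vn; rewrite lcoef_addLS.
by rewrite !(absLS_le_lcoef _ lt_vn) ?addr0 // -yv.
Qed.

Lemma absLSB_le x y : absLS R (subLS x y) <= Num.max (absLS R x) (absLS R y).
Proof. by rewrite -(absLSN y); apply: absLSD_le. Qed.

Lemma absLSDl_lt x y : absLS R y < absLS R x -> absLS R (addLS x y) = absLS R x.
Proof.
move=> lt_yx; apply/eqP; rewrite eq_le; apply/andP; split.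
  by rewrite (le_trans (absLSD_le x y)) // ge_max lexx ltW.
have := absLSB_le (addLS x y) y; rewrite -(@absLS_eqLS x); last by ring.
by rewrite le_max => /orP[//|le_xy]; move: lt_yx; rewrite ltNge le_xy.
Qed.

Lemma absLS_cstLS (c : F) : c != 0 -> absLS R (cstLS c) = 1.
Proof.
move=> c_neq0; rewrite -(expr0z q); apply/eqP; rewrite eq_le absLS_ge ?andbT.
  by apply: absLS_le => n lt0n; rewrite lcoef_polyLS coefC; case: ifP => // _; case: ifP => //; lia.
by rewrite lcoef_polyLS coefC.
Qed.

Lemma absLS_cstLS_le1 (c : F) : absLS R (cstLS c) <= 1.
Proof.
have [->|/absLS_cstLS->//] := eqVneq c 0.
by rewrite (proj2 (absLS_eq0 _)) ?ler01.
Qed.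

Lemma absLS_expLS x N : absLS R (expLS x N) = absLS R x ^+ N.
Proof.
elim: N => [|N IHN]; first by rewrite absLS_cstLS ?oner_neq0.
by rewrite /expLS iterS absLSM -/(expLS x N) IHN exprS.
Qed.

Lemma absLS_inv x y (c : F) : c != 0 -> eqLS (mulLS x y) (cstLS c) ->
  absLS R y = (absLS R x)^-1.
Proof.
move=> c_neq0 /absLS_eqLS; rewrite absLSM absLS_cstLS // => xy1.
have x_neq0 : absLS R x != 0.
  by apply/eqP => x0; move: xy1; rewrite x0 mul0r => /esym/eqP; rewrite oner_eq0.
by rewrite -(mulKf x_neq0 (absLS R y)) xy1 mulr1.
Qed.

Lemma absLS_polyLS_ge1 p : p != 0 -> 1 <= absLS R (polyLS p).
Proof.
move=> p_neq0; rewrite -(expr0z q); apply: le_trans (absLS_ge (v := (size p).-1%:Z) _).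
  by rewrite ler_eXz2l ?q_gt1.
by rewrite lcoef_polyLS absz_nat -lead_coefE lead_coef_eq0.
Qed.

Lemma absLS_polyXn i : absLS R (polyLS (F := F) 'X^i) <= q ^+ i.
Proof.
apply: (@absLS_le _ i) => n lt_in; rewrite lcoef_polyLS coefXn; case: ifP => // _.
by have /eqP/negbTE-> : `|n|%N <> i by lia.
Qed.

Lemma distA_le x p : distA R x <= absLS R (subLS x (polyLS p)).
Proof. by apply: ge_inf; [exists 0 => _ [r ->]; apply: absLS_ge0 | exists p]. Qed.

Lemma distA_lt x e : distA R x < e -> exists p, absLS R (subLS x (polyLS p)) < e.
Proof.
move=> /inf_lt[|_ [p ->] lt_e]; last by exists p.
by exists (absLS R (subLS x (polyLS 0))), 0.
Qed.

Lemma distLS_le x (Y : set (LS F)) y : Y y -> distLS R x Y <= absLS R (subLS x y).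
Proof. by move=> Yy; apply: ge_inf; [exists 0 => _ [z [_ ->]]; apply: absLS_ge0 | exists y]. Qed.

Section QuadraticUnit.
Variables (a : {poly F}) (b : F) (d : nat) (f : LS F).
Hypotheses (d_gt0 : (0 < d)%N) (b_neq0 : b != 0) (f_root : quad_root a b f)
  (abs_f : absLS R f = q ^+ d).

Lemma qd_gt1 : 1 < q ^+ d.
Proof. by rewrite exprn_egt1 ?q_gt1 // -lt0n. Qed.

Lemma absLS_conj : absLS R (subLS (polyLS a) f) = (q ^+ d)^-1.
Proof. by rewrite (absLS_inv _ (mul_quad_root_conj f_root)) ?oppr_eq0 ?abs_f. Qed.

Lemma absLS_sub_conj : absLS R (subLS f (subLS (polyLS a) f)) = q ^+ d.
Proof.
rewrite absLSDl_lt abs_f // absLSN absLS_conj (lt_trans _ qd_gt1) //.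
by rewrite invf_lt1 ?qd_gt1 ?(lt_trans ltr01 qd_gt1).
Qed.

Lemma inAinf1_combLS alpha : inAinf1 d f alpha ->
  exists u v, eqLS alpha (combLS u v f) /\
    absLS R (combLS u v (subLS (polyLS a) f)) <= 1.
Proof.
have conj_root := quad_root_conj f_root.
elim=> [c|i lt_id|x y _ [u1 [v1 [e1 le1]]] _ [u2 [v2 [e2 le2]]]
       |x y _ [u1 [v1 [e1 le1]]] _ [u2 [v2 [e2 le2]]]|x y xy _ [u [v [e le1]]]].
- exists c%:P, 0; rewrite (absLS_eqLS (combLS_polyLS _ _)); split.
    by move=> n; rewrite combLS_polyLS.
  exact: absLS_cstLS_le1.
- exists 0, 'X^i; split; first by rewrite /combLS polyLS0; ring.
  rewrite /combLS polyLS0 (@absLS_eqLS _ (mulLS (polyLS 'X^i) (subLS (polyLS a) f))); last by ring.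
  rewrite absLSM absLS_conj; apply: le_trans (ler_wpM2r _ (absLS_polyXn i)) _.
    by rewrite invr_ge0 exprn_ge0 // ltW // q_gt0.
  by rewrite ler_pdivrMr ?exprn_gt0 ?q_gt0 // mul1r ler_eXn2l ?q_gt1 // ltnW.
- exists (u1 + u2), (v1 + v2); rewrite -(absLS_eqLS (combLS_add _ _ _ _ _)); split.
    by setoid_rewrite e1; setoid_rewrite e2; apply: combLS_add.
  by rewrite (le_trans (absLSD_le _ _)) // ge_max le1 le2.
- exists (u1 * u2 + v1 * v2 * b%:P), (u1 * v2 + u2 * v1 + v1 * v2 * a).
  rewrite -(absLS_eqLS (combLS_mul conj_root _ _ _ _)) absLSM; split.
    by setoid_rewrite e1; setoid_rewrite e2; apply: combLS_mul.
  by rewrite -[leRHS]mulr1 ler_pM ?absLS_ge0.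
- by exists u, v; setoid_rewrite <- xy.
Qed.

Lemma distA_combLS_le u v lam P :
  absLS R (combLS u v (subLS (polyLS a) f)) <= 1 ->
  distA R (mulLS (polyLS (u * lam + v * P)) f) <=
    absLS R (subLS (mulLS (polyLS lam) f) (polyLS P)).
Proof.
move=> conj_le1; apply: le_trans (distA_le _ (u * P + v * a * P + v * b%:P * lam)) _.
rewrite (absLS_eqLS (combLS_conj_approx f_root u v lam P)) absLSM.
by rewrite -[leRHS]mulr1 ler_wpM2l ?absLS_ge0.
Qed.

Lemma absLS_polyLS_le_combLS u v :
  absLS R (combLS u v (subLS (polyLS a) f)) <= 1 ->
  absLS R (polyLS v) * q ^+ d <= absLS R (combLS u v f).
Proof.
move=> conj_le1; have [->|v_neq0] := eqVneq v 0.
  by rewrite polyLS0 (proj2 (absLS_eq0 _)) // mul0r absLS_ge0.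
have gt1 : 1 < absLS R (polyLS v) * q ^+ d.
  by rewrite (lt_le_trans qd_gt1) // ler_pMl ?exprn_gt0 ?q_gt0 // absLS_polyLS_ge1.
have := absLSB_le (combLS u v f) (combLS u v (subLS (polyLS a) f)).
rewrite (absLS_eqLS (combLS_sub _ _ _ _)) absLSM absLS_sub_conj le_max => /orP[//|le_conj].
by have := lt_le_trans gt1 (le_trans le_conj conj_le1); rewrite ltxx.
Qed.

Lemma absLS_Lamhat_factor fi N : eqLS (mulLS f fi) (oneLS F) ->
  absLS R (mulLS (expLS fi N) (sqrtD a f)) = (q ^+ d)^-1 ^+ N * q ^+ d.
Proof.
move=> f_fi; rewrite absLSM absLS_expLS (absLS_inv _ f_fi) ?oner_neq0 // abs_f.
by rewrite (absLS_eqLS (sqrtD_conj a f)) absLS_sub_conj.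
Qed.

End QuadraticUnit.

End AbsoluteValue.

End LaurentSeries.

Theorem lemma2 (F : finFieldType) (R : realType) (a : {poly F}) (b : F) (d : nat)
    (f fi alpha : LS F) (N l : nat) :
  a \is monic -> size a = d.+1 -> (0 < d)%N -> b != 0 ->
  eqLS (mulLS f f) (addLS (mulLS (polyLS a) f) (cstLS b)) ->
  absLS R f = (#|F|%:R : R) ^+ d ->
  eqLS (mulLS f fi) (oneLS F) ->
  inAinf1 d f alpha -> ~ eqLS alpha (cstLS 0) ->
  (l < d)%N ->
  let q : R := #|F|%:R in
  let eps : R := q ^ (- ((d * N + l)%N)%:Z) in
  let delta : R := q ^ (- (d * N)%N%:Z) * eps in
  delta < (absLS R alpha)^-1 ->
  forall lam : {poly F}, Lam R f eps lam ->
    distLS R (mulLS alpha (mulLS (mulLS (expLS fi N) (sqrtD a f)) (polyLS lam)))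
             (Lamhat R a f fi N eps)
    < absLS R alpha * delta.
Proof.
move=> _ _ d_gt0 b_neq0 f_root abs_f f_fi alpha_A alpha_neq0 _ q eps delta _ lam.
move=> /distA_lt[P lt_eps].
have [u [v [alpha_uv conj_le1]]] := inAinf1_combLS b_neq0 f_root abs_f alpha_A.
pose mu := u * lam + v * P.
have mu_Lam : Lam R f eps mu.
  by rewrite /Lam /mkset; apply: le_lt_trans (distA_combLS_le f_root lam P conj_le1) lt_eps.
have y_hat : Lamhat R a f fi N eps
    (mulLS (mulLS (expLS fi N) (sqrtD a f)) (polyLS mu)) by exists mu.
apply: le_lt_trans (distLS_le R _ y_hat) _.
rewrite (absLS_eqLS R (combLS_mul_sub _ _ _ alpha_uv)) absLSM.
rewrite (absLS_Lamhat_factor d_gt0 b_neq0 f_root abs_f N f_fi) absLSM.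
have alpha_gt0 : 0 < absLS R alpha.
  by rewrite lt_def absLS_ge0 andbT; apply/eqP => /absLS_eq0.
rewrite /delta /q -exprnN exprM -exprVn.
set Q := #|F|%:R ^+ d; set r := absLS R (subLS _ _) in lt_eps *.
have QN_gt0 : 0 < Q^-1 ^+ N by rewrite exprn_gt0 // invr_gt0 exprn_gt0 // q_gt0.
have le_mid : Q^-1 ^+ N * Q * (absLS R (polyLS v) * r) <= Q^-1 ^+ N * (absLS R alpha * r).
  rewrite -mulrA ler_pM2l // mulrA; apply: ler_wpM2r; first exact: absLS_ge0.
  by rewrite mulrC (absLS_eqLS R alpha_uv) (absLS_polyLS_le_combLS d_gt0 b_neq0 f_root abs_f).
apply: le_lt_trans le_mid _.
by rewrite mulrCA ltr_pM2l // ltr_pM2l.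
Qed.
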